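(* Let $\hat W=\begin{pmatrix}\hat 1&\hat{\mathbf c}&\hat d\\0&\hat{\mathsf A}&\hat{\mathbf b}\\0&0&\hat 1\end{pmatrix}$ be a first degree iMPO in regular form. Then there exist a row vector $\mathbf t$ and a column vector $\mathbf s$ (of length $\chi$) such that, with $$L=\begin{pmatrix}1&\mathbf t&0\\0&\mathrm{Id}&\mathbf s\\0&0&1\end{pmatrix},\qquad \hat W'=L\hat WL^{-1},$$ the identity component of $\hat W'$ has the form $$W'_0=\langle\hat 1,\hat W'\rangle=\begin{pmatrix}1&0&d_0'\\0&A_0&0\\0&0&1\end{pmatrix}$$ for some number $d_0'$, where $A_0=\langle\hat 1,\hat{\mathsf A}\rangle$. Moreover the middle block of $\hat W'$ equals $\hat{\mathsf A}$.
   Context: $\mathcal A$ is the algebra of operators on $\mathbb C^q$ with inner product $\langle\hat A,\hat B\rangle=\mathrm{Tr}[\hat A^\dagger\hat B]/\mathrm{Tr}[\hat 1]$ and an orthonormal basis $\{\hat O_\alpha\}$ with $\hat O_0=\hat 1$; for a matrix with entries in $\mathcal A$, $\langle\hat 1,\cdot\rangle$ is taken entrywise, and $(W_\alpha)_{ab}=\langle\hat O_\alpha,\hat W_{ab}\rangle$. The transfer matrix of a square such matrix is $T_W=\sum_\alpha\overline{W_\alpha}\otimes W_\alpha$. An iMPO in regular form of bond dimension $\chi$ is a $(\chi+2)\times(\chi+2)$ matrix with entries in $\mathcal A$ of the displayed block form (block sizes $1,\chi,1$); it is first degree if every eigenvalue of $T_A$ (transfer matrix of $\hat{\mathsf A}$)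 has modulus $<1$. *)

From HB Require Import structures.
From mathcomp Require Import all_boot all_order all_algebra all_field.
From mathcomp Require Import mxtens.
Set Implicit Arguments. Unset Strict Implicit. Unset Printing Implicit Defensive.
Import Order.TTheory GRing.Theory Num.Theory.
Local Open Scope ring_scope.

Notation Op q := 'M[algC]_q.+1.

Definition opip (q : nat) (X Y : Op q) : algC :=
  \tr ((map_mx Num.conj X)^T *m Y) / (\tr (1 : Op q)).

(* orthonormal family indexed by 'I_q.+1 * 'I_q.+1 (i.e. q.+1^2 elements,
   hence an orthonormal basis), with O_0 = 1 at index (ord0, ord0). *)
Definition onb (q : nat) (O : 'I_q.+1 * 'I_q.+1 -> Op q) : Prop :=
  O (ord0, ord0) = 1 /\
  forall a b, opip (O a) (O b) = (a == b)%:R.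

Definition ocomp (q m n : nat) (Oa : Op q) (W : 'M[Op q]_(m, n)) : 'M[algC]_(m, n) :=
  map_mx (opip Oa) W.

Definition transfer (q n : nat) (O : 'I_q.+1 * 'I_q.+1 -> Op q)
  (W : 'M[Op q]_n) : 'M[algC]_(n * n) :=
  \sum_(a : 'I_q.+1 * 'I_q.+1) tensmx (map_mx Num.conj (ocomp (O a) W)) (ocomp (O a) W).

Definition first_degree (q n : nat) (O : 'I_q.+1 * 'I_q.+1 -> Op q)
  (A : 'M[Op q]_n) : Prop :=
  forall lam : algC, eigenvalue (transfer O A) lam -> `|lam| < 1.

Definition regular_impo (q chi : nat) (c : 'M[Op q]_(1, chi)) (d : 'M[Op q]_1)
  (A : 'M[Op q]_chi) (b : 'M[Op q]_(chi, 1)) : 'M[Op q]_(1 + chi + 1) :=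
  block_mx (block_mx 1 c 0 A) (col_mx d b) 0 1.

Definition gaugeL (chi : nat) (t : 'rV[algC]_chi) (s : 'cV[algC]_chi)
  : 'M[algC]_(1 + chi + 1) :=
  block_mx (block_mx 1 t 0 1) (col_mx 0 s) 0 1.

Definition scal_op (q n : nat) (M : 'M[algC]_n) : 'M[Op q]_n :=
  map_mx (fun a => a%:M) M.

Definition conjL (q chi : nat) (L : 'M[algC]_(1 + chi + 1))
  (W : 'M[Op q]_(1 + chi + 1)) : 'M[Op q]_(1 + chi + 1) :=
  scal_op q L *m W *m scal_op q (invmx L).

Definition mid_block (R : Type) (chi : nat) (W : 'M[R]_(1 + chi + 1)) : 'M[R]_chi :=
  drsubmx (ulsubmx W).

From HB Require Import structures.
From mathcomp Require Import all_boot all_order all_algebra all_field.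
From mathcomp Require Import mxtens.
From mathcomp Require Import ring.
Set Implicit Arguments. Unset Strict Implicit. Unset Printing Implicit Defensive.
Import Order.TTheory GRing.Theory Num.Theory.
Local Open Scope ring_scope.

(* Conjugating by L only shifts c, b and d: with T, S the scalar images of t, s,
   the new identity components are c0 - t (1 - A0) and b0 + (1 - A0) s, while
   the middle block stays A.  Both can be cancelled as soon as 1 - A0 is
   invertible.  If r A0 = r for a row r != 0, then the functional
   conj r (x) r is nonnegative on vectorised positive matrices sum_i w_i w_i^*,
   the transfer matrix maps these to themselves (w |-> A_alpha w), and the value
   never decreases since the alpha = 0 term alone returns |r w|^2.  Starting from
   w = r^*, the values stay >= |r r^*|^2 > 0, whereas all entries of T_A ^ n tend
   to 0 when every eigenvalue has modulus < 1 (Cayley-Hamilton reduces this to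
   first-order recurrences u_(n+1) = lam u_n + o(1)). *)

Lemma bernoulli_ineq (R : numDomainType) (h : R) k :
  0 <= h -> 1 + k%:R * h <= (1 + h) ^+ k.
Proof.
move=> h0; elim: k => [|k IH]; first by rewrite mul0r addr0 expr0.
have h1 : 0 <= 1 + h by rewrite addr_ge0.
rewrite exprS; apply: le_trans (ler_wpM2l h1 IH).
have -> : (1 + h) * (1 + k%:R * h) = 1 + k.+1%:R * h + h * (k%:R * h).
  by rewrite -natr1; ring.
by rewrite lerDl !mulr_ge0.
Qed.

Section Vanishing.
Variable R : archiNumFieldType.
Implicit Types (u : nat -> R) (e r : R).

Definition vanishing u :=
  forall e, 0 < e -> exists N, forall n, (N <= n)%N -> `|u n| <= e.

Lemma vanishing_not_bounded_below u e :
  0 < e -> vanishing u -> ~ (forall n, e <= `|u n|).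
Proof.
move=> e0 u0 ue.
have [N /(_ N (leqnn N)) uN] := u0 (e / 2) (divr_gt0 e0 (ltr0n _ 2)).
have := le_trans (ue N) uN.
by rewrite ler_pdivlMr ?ltr0n // mulr_natr mulr2n gerDl lt_geF.
Qed.

Lemma geometric_small r C e : 0 < r -> r < 1 -> 0 <= C -> 0 < e ->
  exists k, r ^+ k * C <= e.
Proof.
move=> r0 r1 C0 e0; set h := r^-1 - 1.
have h0 : 0 < h by rewrite subr_gt0 invf_gt1.
have eh0 : 0 < e * h by rewrite mulr_gt0.
exists (Num.bound (C / (e * h))); set k := Num.bound _.
have kb : C < k%:R * h * e.
  by rewrite -mulrA [h * e]mulrC -ltr_pdivrMr // archi_boundP // divr_ge0 // ltW.
have rkV : (r ^+ k)^-1 = (1 + h) ^+ k by rewrite addrC subrK exprVn.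
rewrite -ler_pdivlMl ?exprn_gt0 // rkV.
apply: le_trans (ler_wpM2r (ltW e0) (bernoulli_ineq k (ltW h0))).
by rewrite mulrDl mul1r (le_trans (ltW kb)) // lerDr ltW.
Qed.

Lemma affine_contraction_eventually_le u r M N : 0 < r -> r < 1 -> 0 < M ->
  (forall n, (N <= n)%N -> `|u n.+1| <= r * `|u n| + (1 - r) * M) ->
  exists K, forall n, (K <= n)%N -> `|u n| <= M + M.
Proof.
move=> r0 r1 M0 uS.
have decay k : `|u (N + k)%N| - M <= r ^+ k * `|u N|.
  elim: k => [|k IH]; first by rewrite addn0 expr0 mul1r gerBl ltW.
  rewrite addnS (le_trans (lerD (uS _ (leq_addr k N)) (lexx (- M)))) //.
  have -> : r * `|u (N + k)%N| + (1 - r) * M - M = r * (`|u (N + k)%N| - M).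
    by ring.
  by rewrite exprS -mulrA ler_wpM2l // ltW.
have [K rK] := geometric_small r0 r1 (normr_ge0 (u N)) M0.
exists (N + K)%N => n NKn; have Nn := leq_trans (leq_addr K N) NKn.
rewrite -(subnKC Nn) -lerBlDr (le_trans (decay _)) // (le_trans _ rK) //.
by rewrite ler_wpM2r // ler_wiXn2l ?ltW // leq_subRL.
Qed.

Lemma vanishing_first_order_recurrence (lam : R) u : `|lam| < 1 ->
  vanishing (fun n => u n.+1 - lam * u n) -> vanishing u.
Proof.
move=> lam1 w0 e e0; set r := (1 + `|lam|) / 2; set M := e / 2.
have two0 : (0 : R) < 2 by rewrite ltr0n.
have r0 : 0 < r by rewrite divr_gt0 // ltr_pwDl.
have r1 : r < 1 by rewrite ltr_pdivrMr // mul1r (_ : (2 : R) = 1 + 1) // ltrD2l.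
have lam_r : `|lam| <= r by rewrite ler_pdivlMr // mulr_natr mulr2n lerD2r ltW.
have M0 : 0 < M by rewrite divr_gt0.
have [N wN] : exists N,
    forall n, (N <= n)%N -> `|u n.+1 - lam * u n| <= (1 - r) * M.
  by apply: w0; rewrite mulr_gt0 // subr_gt0.
have [K uK] : exists K, forall n, (K <= n)%N -> `|u n| <= M + M.
  apply: (affine_contraction_eventually_le (N := N) r0 r1 M0) => n Nn.
  rewrite -[u n.+1](subrK (lam * u n)) (le_trans (ler_normD _ _)) //.
  by rewrite addrC lerD ?wN // normrM ler_wpM2r.
by exists K => n Kn; rewrite [e]splitr uK.
Qed.

(* [shift_factors rs u] applies [\prod_(r <- rs) (S - r)] to [u], where [S] is
   the shift [u |-> u \o succn]. *)
Fixpoint shift_factors (rs : seq R) u : nat -> R :=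
  if rs is r :: rs' then shift_factors rs' (fun n => u n.+1 - r * u n) else u.

Lemma eq_shift_factors rs u v :
  u =1 v -> shift_factors rs u =1 shift_factors rs v.
Proof.
elim: rs u v => [|r rs IH] u v uv //=.
by apply: IH => n; rewrite !uv.
Qed.

Lemma vanishing_shift_factors rs u : all (fun r => `|r| < 1) rs ->
  vanishing (shift_factors rs u) -> vanishing u.
Proof.
elim: rs u => [|r rs IH] u //= /andP[r1 rs1] /IH-/(_ rs1).
exact: vanishing_first_order_recurrence.
Qed.
End Vanishing.

Section MatrixPowers.
Variables (k m p : nat) (T : 'M[algC]_k.+1).
Variables (Y : 'M[algC]_(m, k.+1)) (X : 'M[algC]_(k.+1, p)).

Lemma shift_factors_mx_pow rs i j :
  shift_factors rs (fun n => (Y *m T ^+ n *m X) i j) =1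
  (fun n => (Y *m horner_mx T (\prod_(z <- rs) ('X - z%:P)) *m T ^+ n *m X) i j).
Proof.
elim: rs Y => [|r rs IH] Z n /=; first by rewrite big_nil rmorph1 mulmx1.
rewrite (@eq_shift_factors _ _ _
  (fun n => (Z *m (T - r%:M) *m T ^+ n *m X) i j)).
  by rewrite IH big_cons rmorphM rmorphB /= horner_mx_X horner_mx_C mulmxA.
move=> l; rewrite mulmxBr !mulmxBl [RHS]mxE [X in _ = _ + X]mxE; congr (_ - _).
  by rewrite exprS -mulmxE mulmxA.
by rewrite mul_mx_scalar -!scalemxAl [RHS]mxE.
Qed.

Lemma vanishing_mx_pow i j : (forall l, eigenvalue T l -> `|l| < 1) ->
  vanishing (fun n => (Y *m T ^+ n *m X) i j).
Proof.
move=> T1; have [rs charT] := closed_field_poly_normal (char_poly T).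
rewrite (monicP (char_poly_monic T)) scale1r in charT.
apply: (vanishing_shift_factors (rs := rs)).
  apply/allP => r rs_r; apply: T1.
  by rewrite eigenvalue_root_char charT root_prod_XsubC.
move=> e e0; exists 0%N => n _.
rewrite shift_factors_mx_pow -charT Cayley_Hamilton mulmx0 !mul0mx mxE.
by rewrite normr0 ltW.
Qed.
End MatrixPowers.

Lemma tensmx11E (R : pzRingType) (a b : 'M[R]_1) : (a *t b) 0 0 = a 0 0 * b 0 0.
Proof.
by rewrite !mxE; case: (@mxtens_unindex 1 1 0) => i1 i2 /=; rewrite !ord1.
Qed.

(* [herm_tens ws] is the vectorisation of the positive matrix [\sum_i w_i w_i^*];
   pairing it with [conj r *t r] gives [row_energy r ws]. *)
Definition herm_tens chi (I : finType) (ws : I -> 'cV[algC]_chi)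
  : 'M[algC]_(chi * chi, 1 * 1) :=
  \sum_i (map_mx Num.conj (ws i) *t ws i).

Definition row_energy chi (r : 'rV[algC]_chi) (I : finType)
  (ws : I -> 'cV[algC]_chi) : algC :=
  \sum_i `|(r *m ws i) 0 0| ^+ 2.

Lemma tens_row_herm_tens chi (r : 'rV[algC]_chi) (I : finType)
    (ws : I -> 'cV_chi) :
  ((map_mx Num.conj r *t r) *m herm_tens ws) 0 0 = row_energy r ws.
Proof.
rewrite mulmx_sumr summxE; apply: eq_bigr => i _.
by rewrite tensmx_mul -map_mxM tensmx11E mxE normCK mulrC.
Qed.

Section TransferMatrix.
Variables (q chi : nat) (O : 'I_q.+1 * 'I_q.+1 -> Op q) (A : 'M[Op q]_chi).
Hypothesis O0 : O (ord0, ord0) = 1.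

Definition transfer_step (I : finType) (ws : I -> 'cV[algC]_chi) :=
  fun p : ('I_q.+1 * 'I_q.+1) * I => ocomp (O p.1) A *m ws p.2.

Lemma transfer_herm_tens (I : finType) (ws : I -> 'cV_chi) :
  transfer O A *m herm_tens ws = herm_tens (transfer_step ws).
Proof.
rewrite /transfer /herm_tens mulmx_suml.
under eq_bigr => a _ do rewrite mulmx_sumr.
by rewrite pair_bigA; apply: eq_bigr => p _; rewrite tensmx_mul map_mxM.
Qed.

Lemma row_energy_transfer_step (r : 'rV_chi) (I : finType) (ws : I -> 'cV_chi) :
  r *m ocomp 1 A = r -> row_energy r ws <= row_energy r (transfer_step ws).
Proof.
move=> rA; rewrite /row_energy /transfer_step -(pair_bigA _ (fun a i =>
  `|(r *m (ocomp (O a) A *m ws i)) 0 0| ^+ 2)) (bigD1 (ord0, ord0)) //= O0.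
under [in X in _ <= X + _]eq_bigr => i _ do rewrite mulmxA rA.
by rewrite lerDl; do 2!apply: sumr_ge0 => ? _; apply: exprn_ge0.
Qed.

Lemma transfer_pow_herm_tens (r : 'rV_chi) (I : finType) (ws : I -> 'cV_chi)
    n :
  r *m ocomp 1 A = r ->
  exists (J : finType) (vs : J -> 'cV_chi),
    transfer O A ^+ n *m herm_tens ws = herm_tens vs /\
    row_energy r ws <= row_energy r vs.
Proof.
move=> rA; elim: n => [|n [J [vs [Tvs ws_vs]]]].
  by exists I, ws; rewrite expr0 mul1mx.
exists _, (transfer_step vs); split.
  by rewrite exprS -mulmxE -mulmxA Tvs transfer_herm_tens.
exact: le_trans ws_vs (row_energy_transfer_step vs rA).
Qed.
End TransferMatrix.

Lemma first_degree_fixed_row q chi (O : 'I_q.+1 * 'I_q.+1 -> Op q)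
    (A : 'M[Op q]_chi) (r : 'rV[algC]_chi) :
  O (ord0, ord0) = 1 ->
  first_degree O A -> r *m ocomp 1 A = r -> r = 0.
Proof.
case: chi A r => [|m] A r O0 fdA rA; first by rewrite thinmx0.
have [// | r_neq0] := eqVneq r 0; exfalso.
pose ws := fun _ : 'I_1 => (map_mx Num.conj r)^T.
have ws_gt0 : 0 < row_energy r ws.
  rewrite /row_energy big_ord1 exprn_gt0 // normr_gt0 /ws map_trmx -dotmxE.
  by rewrite gt_eqF // dotmx_is_dotmx.
apply: (vanishing_not_bounded_below ws_gt0
  (vanishing_mx_pow (map_mx Num.conj r *t r) (herm_tens ws) 0 0 fdA)) => n.
have [J [vs [Tvs ws_vs]]] := transfer_pow_herm_tens O0 ws n rA.
rewrite -mulmxA Tvs (tens_row_herm_tens r vs) ger0_norm // sumr_ge0 // => j _.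
exact: exprn_ge0.
Qed.

Lemma first_degree_unitmx q chi (O : 'I_q.+1 * 'I_q.+1 -> Op q)
    (A : 'M[Op q]_chi) :
  O (ord0, ord0) = 1 -> first_degree O A -> 1 - ocomp 1 A \in unitmx.
Proof.
move=> O0 fdA; rewrite unitmxE unitfE; apply/negP => /det0P [v v_neq0].
rewrite mulmxBr mulmx1 => /eqP; rewrite subr_eq0 => /eqP vA.
by move: v_neq0; rewrite (first_degree_fixed_row O0 fdA (esym vA)) eqxx.
Qed.

Lemma opip_is_linear q (X : Op q) : linear_for *%R (opip X).
Proof.
by move=> a Y Z; rewrite /opip mulmxDr -scalemxAr mxtraceD mxtraceZ mulrDl mulrA.
Qed.

HB.instance Definition _ q (X : Op q) :=
  GRing.isLinear.Build algC (Op q) algC *%R (opip X) (opip_is_linear X).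

HB.instance Definition _ q m n (Oa : Op q) :=
  GRing.isZmodMorphism.Build 'M[Op q]_(m, n) 'M[algC]_(m, n) (ocomp Oa)
    (@map_mxB _ _ (opip Oa) m n).

Lemma opip_scalar1 q (a : algC) : opip (1 : Op q) a%:M = a.
Proof.
rewrite /opip map_mx1 trmx1 mul1mx !mxtrace_scalar -mulr_natr mulfK //.
by rewrite pnatr_eq0.
Qed.

Section Components.
Variables (q : nat) (Oa : Op q).

Lemma ocomp_scalar_mull m n p (M : 'M[algC]_(m, n)) (W : 'M[Op q]_(n, p)) :
  ocomp Oa (map_mx scalar_mx M *m W) = M *m ocomp Oa W.
Proof.
apply/matrixP => i j; rewrite !mxE linear_sum; apply: eq_bigr => k _.
by rewrite !mxE -mulmxE mul_scalar_mx linearZ.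
Qed.

Lemma ocomp_scalar_mulr m n p (W : 'M[Op q]_(m, n)) (M : 'M[algC]_(n, p)) :
  ocomp Oa (W *m map_mx scalar_mx M) = ocomp Oa W *m M.
Proof.
apply/matrixP => i j; rewrite !mxE linear_sum; apply: eq_bigr => k _.
by rewrite !mxE -mulmxE mul_mx_scalar linearZ /= mulrC.
Qed.
End Components.

Lemma ocomp1_map_scalar q m n (M : 'M[algC]_(m, n)) :
  ocomp (1 : Op q) (map_mx scalar_mx M) = M.
Proof. by apply/matrixP => i j; rewrite !mxE opip_scalar1. Qed.

Lemma ocomp1_mx1 q n : ocomp (1 : Op q) (1%:M : 'M_n) = 1%:M.
Proof. by rewrite -(map_mx1 (@scalar_mx _ q.+1)) ocomp1_map_scalar. Qed.

Section RegularForm.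
Variables (R : pzRingType) (chi : nat).
Implicit Types (c : 'rV[R]_chi) (d : 'M[R]_1) (A : 'M[R]_chi) (b : 'cV[R]_chi).

Definition regular_mx c d A b : 'M[R]_(1 + chi + 1) :=
  block_mx (block_mx 1 c 0 A) (col_mx d b) 0 1.

Lemma mul_regular_mx c d A b c' d' A' b' :
  regular_mx c d A b *m regular_mx c' d' A' b' =
  regular_mx (c' + c *m A') (d' + c *m b' + d) (A *m A') (A *m b' + b).
Proof.
rewrite /regular_mx !mulmx_block !mul_block_col !mul_col_mx.
rewrite !(mul1mx, mulmx1, mul0mx, mulmx0, addr0, add0r).
by rewrite col_mx0 addr0 add_col_mx.
Qed.

Lemma regular_mx1 : regular_mx 0 0 1%:M 0 = 1%:M.
Proof. by rewrite /regular_mx col_mx0 -!scalar_mx_block. Qed.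

Lemma mid_block_regular_mx c d A b : mid_block (regular_mx c d A b) = A.
Proof. by rewrite /mid_block /regular_mx block_mxKul block_mxKdr. Qed.
End RegularForm.

Lemma map_regular_mx (R S : pzRingType) (f : {rmorphism R -> S}) chi
    (c : 'rV[R]_chi) d A b :
  map_mx f (regular_mx c d A b) =
  regular_mx (map_mx f c) (map_mx f d) (map_mx f A) (map_mx f b).
Proof. by rewrite /regular_mx !map_block_mx map_col_mx map_mx1 !map_mx0. Qed.

Lemma ocomp1_regular_mx q chi (c : 'rV[Op q]_chi) d A b :
  ocomp 1 (regular_mx c d A b) =
  regular_mx (ocomp 1 c) (ocomp 1 d) (ocomp 1 A) (ocomp 1 b).
Proof.
rewrite /ocomp /regular_mx !map_block_mx map_col_mx !map_mx0 -!/(ocomp _ _).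
by rewrite ocomp1_mx1.
Qed.

Lemma invmx_gaugeL chi (t : 'rV[algC]_chi) s :
  invmx (gaugeL t s) = regular_mx (- t) (t *m s) 1%:M (- s).
Proof.
have LLinv : gaugeL t s *m regular_mx (- t) (t *m s) 1%:M (- s) = 1%:M.
  rewrite mul_regular_mx !(mulmx1, mul1mx, mulmxN) !subrr !addNr add0r.
  exact: regular_mx1.
have [L_unit _] := mulmx1_unit LLinv.
by rewrite -[invmx _]mulmx1 -LLinv mulmxA mulVmx // mul1mx.
Qed.

Lemma conjL_gauge_regular q chi (t : 'rV[algC]_chi) s (c : 'rV[Op q]_chi) d A b :
  let T := map_mx scalar_mx t in let S := map_mx scalar_mx s in
  conjL (gaugeL t s) (regular_impo c d A b) =
  regular_mx (c + T *m A - T) (d + T *m b + (T *m S - (c + T *m A) *m S)) A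
    (b + S - A *m S).
Proof.
move=> T S; rewrite /conjL /scal_op invmx_gaugeL !(map_regular_mx scalar_mx).
rewrite !map_mx0 map_mx1 !map_mxN !map_mxM -/T -/S.
rewrite -[regular_impo _ _ _ _]/(regular_mx c d A b) !mul_regular_mx.
by rewrite !(mulmx1, mul1mx, mulmxN, addr0); congr regular_mx; rewrite addrC.
Qed.

Theorem lemma4 (q chi : nat) (O : 'I_q.+1 * 'I_q.+1 -> 'M[algC]_q.+1)
  (c : 'M['M[algC]_q.+1]_(1, chi)) (d : 'M['M[algC]_q.+1]_1)
  (A : 'M['M[algC]_q.+1]_chi) (b : 'M['M[algC]_q.+1]_(chi, 1)) :
  onb O -> first_degree O A ->
  exists (t : 'rV[algC]_chi) (s : 'cV[algC]_chi),
    let W' := conjL (gaugeL t s) (regular_impo c d A b) in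
    (exists d0' : algC,
       ocomp 1 W' =
       block_mx (block_mx 1 0 0 (ocomp 1 A)) (col_mx d0'%:M 0) 0 1)
    /\ mid_block W' = A.
Proof.
move=> [O0 _] fdA; set A0 := ocomp 1 A.
have A0_unit : 1 - A0 \in unitmx := first_degree_unitmx O0 fdA.
set t := ocomp 1 c *m invmx (1 - A0).
set s := - (invmx (1 - A0) *m ocomp 1 b).
exists t, s => /=; rewrite conjL_gauge_regular mid_block_regular_mx.
split=> //; rewrite ocomp1_regular_mx.
have -> : ocomp 1 (c + map_mx scalar_mx t *m A - map_mx scalar_mx t) = 0.
  rewrite raddfB raddfD /= ocomp_scalar_mull ocomp1_map_scalar.
  by rewrite -[ocomp 1 c](mulmxKV A0_unit) -/t mulmxBr mulmx1 subrK subrr.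
have -> : ocomp 1 (b + map_mx scalar_mx s - A *m map_mx scalar_mx s) = 0.
  rewrite raddfB raddfD /= ocomp_scalar_mulr ocomp1_map_scalar.
  by rewrite -addrA -[s in s - _]mul1mx -mulmxBl /s mulmxN mulKVmx // subrr.
by eexists; congr (block_mx _ (col_mx _ _) _ _); exact: mx11_scalar.
Qed.
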